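(* Let $A\bowtie^{\theta} I$ be an amalgamated Banach algebra as in the context, and assume $\sigma(A)\neq\emptyset$ and that the linear span of $\theta(A)I\cup I\theta(A)$ is dense in $I$. Identify characters of $A\bowtie^\theta I$ with pairs $(\phi,\psi)\in A^*\times I^*$ via $(a,i)\mapsto\phi(a)+\psi(i)$. Then $\sigma(A\bowtie^{\theta} I)=E\cup F$, where $$E=\{(\phi_{\psi,i},\psi): \psi\in\sigma(I),\ i\in I,\ \psi(i)=1\},\qquad \phi_{\psi,i}(a)=\psi(\theta(a)i)\ (a\in A),$$ $$F=\{(\phi,0):\phi\in\sigma(A)\}.$$ Moreover, with respect to the weak$^*$ topology, $E$ is open and $F$ is closed in $\sigma(A\bowtie^\theta I)$.
   Context: Let $A$ and $B$ be Banach algebras, $\theta:A\to B$ a continuous algebra homomorphism with $\|\theta\|\le 1$, and $I$ a closed two-sided ideal of $B$. The amalgamated Banach algebra $A\bowtie^{\theta} I$ is the Banach space $\{(a,i): a\in A,\ i\in I\}$ with norm $\|(a,i)\|=\|a\|+\|i\|$ and product $(a,i)\cdot(a',i')=(aa',\ \theta(a)i'+i\theta(a')+ii')$. For a Banach algebra $C$, $\sigma(C)$ denotes the set of nonzero multiplicative linear functionals (characters) on $C$, with the relative weak$^*$ topology. $\theta(A)I$ denotes $\{\theta(a)i: a\in A, i\in I\}$ and similarly for $I\theta(A)$. *)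

From HB Require Import structures.
From mathcomp Require Import all_boot all_order all_algebra.
Set Implicit Arguments. Unset Strict Implicit. Unset Printing Implicit Defensive.
Import Order.TTheory GRing.Theory Num.Theory.
Local Open Scope ring_scope.

(* Possibly non-unital normed / Banach algebras over a scalar field K
   (K = C or R in the paper; here any numFieldType). *)

Definition is_cauchy (K : numFieldType) (V : lmodType K) (N : V -> K)
  (u : nat -> V) : Prop :=
  forall eps : K, 0 < eps -> exists M : nat,
    forall m n : nat, (M <= m)%N -> (M <= n)%N -> N (u m - u n) < eps.

Definition converges_to (K : numFieldType) (V : lmodType K) (N : V -> K)
  (u : nat -> V) (l : V) : Prop :=
  forall eps : K, 0 < eps -> exists M : nat,
    forall n : nat, (M <= n)%N -> N (u n - l) < eps.

Definition banach_algebra (K : numFieldType) (V : lmodType K)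
  (mul : V -> V -> V) (N : V -> K) : Prop :=
  [/\
      (forall x y z, mul x (mul y z) = mul (mul x y) z),
      (forall (c : K) x y z, mul (c *: x + y) z = c *: mul x z + mul y z),
      (forall (c : K) x y z, mul z (c *: x + y) = c *: mul z x + mul z y),
      [/\ (forall x, 0 <= N x),
          (forall x, N x = 0 -> x = 0),
          (forall x y, N (x + y) <= N x + N y),
          (forall (c : K) x, N (c *: x) = `|c| * N x) &
          (forall x y, N (mul x y) <= N x * N y)] &
      (forall u : nat -> V, is_cauchy N u -> exists l, converges_to N u l)].

Definition closed_ideal (K : numFieldType) (B : lmodType K)
  (mulB : B -> B -> B) (NB : B -> K) (I : pred B) : Prop :=
  [/\ 0 \in I,
      (forall (c : K) x y, x \in I -> y \in I -> c *: x + y \in I),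
      (forall x i, i \in I -> mulB x i \in I),
      (forall x i, i \in I -> mulB i x \in I) &
      (forall (u : nat -> B) l, (forall n, u n \in I) ->
          converges_to NB u l -> l \in I)].

(* Functionals are represented as maps T -> K,
   only their values on S matter. *)
Definition is_character (K : numFieldType) (T : lmodType K)
  (mul : T -> T -> T) (S : pred T) (chi : T -> K) : Prop :=
  [/\ (forall (c : K) x y, x \in S -> y \in S -> chi (c *: x + y) = c * chi x + chi y),
      (forall x y, x \in S -> y \in S -> chi (mul x y) = chi x * chi y) &
      exists2 x, x \in S & chi x != 0].

Definition wstar_open (K : numFieldType) (T : lmodType K)
  (mul : T -> T -> T) (S : pred T) (U : (T -> K) -> Prop) : Prop :=
  forall chi, is_character mul S chi -> U chi ->
    exists n : nat, exists x : 'I_n -> T,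
      (forall k, x k \in S) /\
      exists2 eps : K, 0 < eps &
        forall chi', is_character mul S chi' ->
          (forall k, `|chi' (x k) - chi (x k)| < eps) -> U chi'.

Definition wstar_closed (K : numFieldType) (T : lmodType K)
  (mul : T -> T -> T) (S : pred T) (U : (T -> K) -> Prop) : Prop :=
  wstar_open mul S (fun chi => ~ U chi).

(* The amalgamated algebra A ⋈^θ I, realised inside A × B with carrier
   predicate {(a,i) | i ∈ I}. *)
Definition amal_mul (K : numFieldType) (A B : lmodType K)
  (mulA : A -> A -> A) (mulB : B -> B -> B) (theta : A -> B)
  (p q : (A * B)%type) : (A * B)%type :=
  (mulA p.1 q.1,
   mulB (theta p.1) q.2 + mulB p.2 (theta q.1) + mulB p.2 q.2).

Definition amal_carrier (K : numFieldType) (A B : lmodType K) (I : pred B)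
  : pred (A * B)%type := fun p => p.2 \in I.

Definition amal_norm (K : numFieldType) (A B : lmodType K)
  (NA : A -> K) (NB : B -> K) (p : (A * B)%type) : K := NA p.1 + NB p.2.

Definition in_span_thetaI (K : numFieldType) (A B : lmodType K)
  (mulB : B -> B -> B) (theta : A -> B) (I : pred B) (y : B) : Prop :=
  exists n : nat, exists (c d : 'I_n -> K) (a b : 'I_n -> A) (i j : 'I_n -> B),
    (forall k, i k \in I /\ j k \in I) /\
    y = \sum_(k < n) (c k *: mulB (theta (a k)) (i k) + d k *: mulB (j k) (theta (b k))).

(* A character chi of A ⋈^θ I splits as chi(a, j) = phi a + psi j, with phi := chi(-, 0) and
   psi := chi(0, -) multiplicative.  If psi(i) = 1, multiplying (a, 0) by (0, i) gives
   phi a = psi(θ(a) i), so chi is in E; if psi vanishes on I, phi is a character of A and chi is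
   in F.  Conversely, a character psi of the ideal I with psi(i) = 1 satisfies
   psi(b j) = psi(b i) psi(j) and psi(j b) = psi(j) psi(b i) for all b in B, which makes the members
   of E multiplicative.  A member of E takes the value 1 at some (0, i) while members of F vanish on
   0 × I, so E contains the weak-* neighbourhood {chi | chi(0, i) <> 0} of each of its points, and F
   is its complement. *)
From HB Require Import structures.
From mathcomp Require Import all_boot all_order all_algebra.
From Stdlib Require Import Classical.
From mathcomp Require Import ring.
Set Implicit Arguments. Unset Strict Implicit. Unset Printing Implicit Defensive.
Import Order.TTheory GRing.Theory Num.Theory.
Local Open Scope ring_scope.

Definition linear_on (K : numFieldType) (T : lmodType K) (S : pred T) (f : T -> K) : Prop :=
  forall (c : K) x y, x \in S -> y \in S -> f (c *: x + y) = c * f x + f y.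

Definition multiplicative_on (K : numFieldType) (T : lmodType K)
    (mul : T -> T -> T) (S : pred T) (f : T -> K) : Prop :=
  forall x y, x \in S -> y \in S -> f (mul x y) = f x * f y.

Lemma addr_self_eq0 (V : zmodType) (x : V) : x + x = x -> x = 0.
Proof. by move=> xx; apply: (addrI x); rewrite xx addr0. Qed.

Lemma linear_fun0 (K : numFieldType) (V W : lmodType K) (f : V -> W) :
  (forall (c : K) x y, f (c *: x + y) = c *: f x + f y) -> f 0 = 0.
Proof. by move=> f_lin; apply: addr_self_eq0; have := f_lin 1 0 0; rewrite !scale1r addr0 => <-. Qed.

Section LinearOn.
Variables (K : numFieldType) (T : lmodType K) (S : pred T) (f : T -> K).
Hypothesis f_lin : linear_on S f.

Lemma linear_onD x y : x \in S -> y \in S -> f (x + y) = f x + f y.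
Proof. by move=> Sx Sy; have := f_lin 1 Sx Sy; rewrite scale1r mul1r. Qed.

Lemma linear_on0 : 0 \in S -> f 0 = 0.
Proof. by move=> S0; apply: addr_self_eq0; rewrite -linear_onD // addr0. Qed.

End LinearOn.

Section IdealCharacter.
Variables (K : numFieldType) (B : lmodType K) (mulB : B -> B -> B) (I : pred B) (psi : B -> K).
Hypothesis mulB_assoc : forall x y z, mulB x (mulB y z) = mulB (mulB x y) z.
Hypothesis I_mull : forall b j, j \in I -> mulB b j \in I.
Hypothesis I_mulr : forall b j, j \in I -> mulB j b \in I.
Hypothesis psi_mul : multiplicative_on mulB I psi.
Variable i : B.
Hypotheses (Ii : i \in I) (psi_i : psi i = 1).

Lemma ideal_character_mulr b j : j \in I -> psi (mulB j b) = psi j * psi (mulB b i).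
Proof.
move=> Ij; rewrite -[psi (mulB j b)]mulr1 -psi_i -psi_mul ?I_mulr //.
by rewrite -mulB_assoc psi_mul ?I_mull.
Qed.

Lemma ideal_character_mull b j : j \in I -> psi (mulB b j) = psi (mulB b i) * psi j.
Proof.
move=> Ij; rewrite -[psi (mulB b j)]mul1r -psi_i -psi_mul ?I_mull //.
by rewrite mulB_assoc psi_mul ?I_mulr // ideal_character_mulr // psi_i mul1r.
Qed.

End IdealCharacter.

Lemma wstar_open_nonvanishing (K : numFieldType) (T : lmodType K) (mul : T -> T -> T)
    (S : pred T) (U : (T -> K) -> Prop) :
  (forall chi, is_character mul S chi -> U chi ->
     exists2 x, x \in S & chi x = 1 /\
       forall chi', is_character mul S chi' -> chi' x != 0 -> U chi') ->
  wstar_open mul S U.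
Proof.
move=> nbhd chi chi_char Uchi; have [x Sx [chix1 Ux]] := nbhd chi chi_char Uchi.
exists 1%N, (fun=> x); split=> //; exists 1 => // chi' chi'_char close.
apply: Ux => //; apply: contraTneq (close ord0) => ->.
by rewrite chix1 sub0r normrN normr1 ltxx.
Qed.

Lemma wstar_open_ext (K : numFieldType) (T : lmodType K) (mul : T -> T -> T)
    (S : pred T) (U V : (T -> K) -> Prop) :
  (forall chi, is_character mul S chi -> U chi <-> V chi) ->
  wstar_open mul S U -> wstar_open mul S V.
Proof.
move=> UV Uopen chi chi_char /(UV _ chi_char) /(Uopen _ chi_char) [n [x [Sx [eps eps_gt0 near]]]].
exists n, x; split=> //; exists eps => // chi' chi'_char close.
by apply/(UV _ chi'_char)/near.
Qed.

Section Amalgamation.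
Variables (K : numFieldType) (A B : lmodType K).
Variables (mulA : A -> A -> A) (mulB : B -> B -> B) (theta : A -> B) (I : pred B).
Hypothesis mulA0 : forall x, mulA x 0 = 0.
Hypothesis mulB_linl : forall (c : K) x y z, mulB (c *: x + y) z = c *: mulB x z + mulB y z.
Hypothesis mulB_linr : forall (c : K) x y z, mulB z (c *: x + y) = c *: mulB z x + mulB z y.
Hypothesis mulB_assoc : forall x y z, mulB x (mulB y z) = mulB (mulB x y) z.
Hypothesis theta_lin : linear theta.
Hypothesis theta_mul : forall a a', theta (mulA a a') = mulB (theta a) (theta a').
Hypothesis I0 : 0 \in I.
Hypothesis I_lin : forall (c : K) x y, x \in I -> y \in I -> c *: x + y \in I.
Hypothesis I_mull : forall b j, j \in I -> mulB b j \in I.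
Hypothesis I_mulr : forall b j, j \in I -> mulB j b \in I.

Local Notation S := (amal_carrier I).
Local Notation mul := (amal_mul mulA mulB theta).

Definition amal_E (chi : (A * B)%type -> K) : Prop :=
  exists psi : B -> K, is_character mulB I psi /\
    exists2 i, i \in I & psi i = 1 /\
      forall a j, j \in I -> chi (a, j) = psi (mulB (theta a) i) + psi j.

Definition amal_F (chi : (A * B)%type -> K) : Prop :=
  exists phi : A -> K, is_character mulA predT phi /\
    forall a j, j \in I -> chi (a, j) = phi a + 0.

Let mul0B x : mulB 0 x = 0.
Proof. exact: (linear_fun0 (f := mulB^~ x) (fun c y z => mulB_linl c y z x)). Qed.

Let mulB0 x : mulB x 0 = 0.
Proof. exact: (linear_fun0 (f := mulB x) (fun c y z => mulB_linr c y z x)). Qed.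

Let theta0 : theta 0 = 0. Proof. exact: linear_fun0 theta_lin. Qed.

Let I_add x y : x \in I -> y \in I -> x + y \in I.
Proof. by move=> Ix Iy; rewrite -[x]scale1r I_lin. Qed.

Let scale_add_pair (c : K) (a a' : A) (j j' : B) :
  c *: ((a, j) : (A * B)%type) + (a', j') = (c *: a + a', c *: j + j').
Proof. by []. Qed.

Let I_mul_terms (a a' : A) (j j' : B) : j \in I -> j' \in I ->
  [/\ mulB (theta a) j' \in I, mulB j (theta a') \in I & mulB j j' \in I].
Proof. by move=> Ij Ij'; split; [apply: I_mull | apply: I_mulr | apply: I_mull]. Qed.

Let amal_mulE a j a' j' :
  mul (a, j) (a', j') = (mulA a a', mulB (theta a) j' + mulB j (theta a') + mulB j j').
Proof. by []. Qed.

Lemma amal_character_split chi a j :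
  is_character mul S chi -> j \in I -> chi (a, j) = chi (a, 0) + chi (0, j).
Proof.
case=> chi_lin _ _ Ij; rewrite -[chi (a, 0)]mul1r -chi_lin //.
by rewrite scale_add_pair !scale1r addr0 add0r.
Qed.

Lemma amal_character_restrict chi : is_character mul S chi ->
  [/\ linear_on predT (fun a => chi (a, 0)),
      multiplicative_on mulA predT (fun a => chi (a, 0)),
      linear_on I (fun j => chi (0, j)) &
      multiplicative_on mulB I (fun j => chi (0, j))].
Proof.
case=> chi_lin chi_mul _; split.
- by move=> c a a' _ _; rewrite -chi_lin // scale_add_pair scaler0 addr0.
- by move=> a a' _ _; rewrite -chi_mul // amal_mulE !mulB0 mul0B !addr0.
- by move=> c j j' Ij Ij'; rewrite -chi_lin // scale_add_pair scaler0 addr0.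
- by move=> j j' Ij Ij'; rewrite -chi_mul // amal_mulE mulA0 theta0 mulB0 mul0B !add0r.
Qed.

Lemma amal_character_fst chi a i : is_character mul S chi -> i \in I -> chi (0, i) = 1 ->
  chi (a, 0) = chi (0, mulB (theta a) i).
Proof.
case=> _ chi_mul _ Ii chi_i; rewrite -[chi (a, 0)]mulr1 -chi_i -chi_mul ?I0 //.
by rewrite amal_mulE mulA0 !mul0B !addr0.
Qed.

Lemma amal_character_E_or_F chi : is_character mul S chi -> amal_E chi \/ amal_F chi.
Proof.
move=> chi_char; have [phi_lin phi_mul psi_lin psi_mul] := amal_character_restrict chi_char.
have [[j Ij psi_j]|psi0] := classic (exists2 j, j \in I & chi (0, j) != 0).
  left; exists (fun j => chi (0, j)); split; first by split=> //; exists j.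
  have Ii : (chi (0, j))^-1 *: j + 0 \in I by rewrite I_lin.
  have psi_i : chi (0, (chi (0, j))^-1 *: j + 0) = 1.
    by rewrite psi_lin // (linear_on0 psi_lin I0) addr0 mulVf.
  exists ((chi (0, j))^-1 *: j + 0) => //; split=> // a k Ik.
  by rewrite amal_character_split // (amal_character_fst _ chi_char Ii psi_i).
have {}psi0 k : k \in I -> chi (0, k) = 0.
  by move=> Ik; case: (eqVneq (chi (0, k)) 0) => // nz; case: psi0; exists k.
right; exists (fun a => chi (a, 0)); split.
  split=> //; have [_ _ [[a j] /= Ij chi_aj]] := chi_char; exists a => //.
  by rewrite amal_character_split // psi0 // addr0 in chi_aj.
by move=> a k Ik; rewrite amal_character_split // psi0.
Qed.

Lemma amal_E_character chi : amal_E chi -> is_character mul S chi.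
Proof.
case=> psi [[psi_lin psi_mul _] [i Ii [psi_i chiE]]].
have psiL b j : j \in I -> psi (mulB b j) = psi (mulB b i) * psi j.
  exact: (ideal_character_mull mulB_assoc I_mull I_mulr psi_mul Ii psi_i).
have psiR b j : j \in I -> psi (mulB j b) = psi j * psi (mulB b i).
  exact: (ideal_character_mulr mulB_assoc I_mull I_mulr psi_mul Ii psi_i).
split.
- move=> c [a j] [a' j'] /= Ij Ij'.
  rewrite scale_add_pair !chiE ?I_lin // theta_lin mulB_linl !psi_lin ?I_mull //; ring.
- move=> [a j] [a' j'] /= Ij Ij'; have [I1 I2 I3] := I_mul_terms a a' Ij Ij'.
  rewrite amal_mulE !chiE ?I_add //.
  rewrite !(linear_onD psi_lin) ?I_add //.
  rewrite theta_mul -mulB_assoc (psiL _ (mulB _ i)) ?I_mull //.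
  by rewrite (psiL _ j') // (psiR _ j) // (psi_mul j j') //; ring.
- exists (0, i); first by [].
  by rewrite chiE // theta0 mul0B (linear_on0 psi_lin I0) add0r psi_i oner_neq0.
Qed.

Lemma amal_F_character chi : amal_F chi -> is_character mul S chi.
Proof.
case=> phi [[phi_lin phi_mul [a _ phi_a]] chiF]; split.
- move=> c [a1 j] [a2 j'] /= Ij Ij'.
  by rewrite scale_add_pair !chiF ?I_lin // phi_lin //; ring.
- move=> [a1 j] [a2 j'] /= Ij Ij'; have [I1 I2 I3] := I_mul_terms a1 a2 Ij Ij'.
  rewrite amal_mulE !chiF ?I_add //.
  by rewrite phi_mul //; ring.
- by exists (a, 0) => //; rewrite chiF // addr0.
Qed.

Lemma amal_E_unit chi : amal_E chi -> exists2 i, i \in I & chi (0, i) = 1.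
Proof.
case=> psi [[psi_lin _ _] [i Ii [psi_i chiE]]]; exists i => //.
by rewrite chiE // theta0 mul0B (linear_on0 psi_lin I0) add0r.
Qed.

Lemma amal_F_vanish chi j : amal_F chi -> j \in I -> chi (0, j) = 0.
Proof.
case=> phi [[phi_lin _ _] chiF] Ij.
by rewrite chiF // (linear_on0 phi_lin (isT : 0 \in predT)) addr0.
Qed.

Lemma amal_E_nonvanishing chi j :
  is_character mul S chi -> j \in I -> chi (0, j) != 0 -> amal_E chi.
Proof.
move=> chi_char Ij chi_j; case: (amal_character_E_or_F chi_char) => // F_chi.
by rewrite amal_F_vanish ?eqxx in chi_j.
Qed.

Lemma amal_E_iff_notF chi : is_character mul S chi -> amal_E chi <-> ~ amal_F chi.
Proof.
move=> chi_char; split; last by case: (amal_character_E_or_F chi_char).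
move=> /amal_E_unit [i Ii chi_i] /amal_F_vanish/(_ Ii).
by rewrite chi_i => /eqP; rewrite oner_eq0.
Qed.

Lemma amal_E_wstar_open : wstar_open mul S amal_E.
Proof.
apply: wstar_open_nonvanishing => chi _ /amal_E_unit [i Ii chi_i].
by exists (0, i) => //; split=> // chi' chi'_char; apply: amal_E_nonvanishing.
Qed.

Lemma amal_F_wstar_closed : wstar_closed mul S amal_F.
Proof. exact: wstar_open_ext amal_E_iff_notF amal_E_wstar_open. Qed.

End Amalgamation.

Theorem theorem5p1 (K : numFieldType) (A B : lmodType K)
  (mulA : A -> A -> A) (NA : A -> K) (mulB : B -> B -> B) (NB : B -> K)
  (theta : A -> B) (I : pred B) :
  banach_algebra mulA NA ->
  banach_algebra mulB NB ->
  (* θ is a continuous algebra homomorphism with ||θ|| <= 1 *)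
  linear theta ->
  (forall a a', theta (mulA a a') = mulB (theta a) (theta a')) ->
  (forall a, NB (theta a) <= NA a) ->
  closed_ideal mulB NB I ->
  (* σ(A) nonempty *)
  (exists phi : A -> K, is_character mulA predT phi) ->
  (* span of θ(A)I ∪ Iθ(A) dense in I *)
  (forall x, x \in I -> forall eps : K, 0 < eps ->
     exists y, in_span_thetaI mulB theta I y /\ NB (x - y) < eps) ->
  let S := @amal_carrier K A B I in
  let mul := amal_mul mulA mulB theta in
  let E := fun chi : (A * B)%type -> K =>
    exists psi : B -> K, is_character mulB I psi /\
      exists2 i, i \in I & psi i = 1 /\
        forall a j, j \in I -> chi (a, j) = psi (mulB (theta a) i) + psi j in
  let F := fun chi : (A * B)%type -> K =>
    exists phi : A -> K, is_character mulA predT phi /\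
      forall a j, j \in I -> chi (a, j) = phi a + 0 in
  [/\ (forall chi, is_character mul S chi <-> (E chi \/ F chi)),
      wstar_open mul S E &
      wstar_closed mul S F].
Proof.
move=> [_ _ mulA_linr _ _] [mulB_assoc mulB_linl mulB_linr _ _] theta_lin theta_mul _.
move=> [I0 I_lin I_mull I_mulr _] _ _ S mul E F.
have mulA0 x : mulA x 0 = 0 by exact: (linear_fun0 (f := mulA x) (fun c y z => mulA_linr c y z x)).
split; last 2 first.
- exact: amal_E_wstar_open.
- exact: amal_F_wstar_closed.
move=> chi; split; first exact: amal_character_E_or_F.
by case; [apply: amal_E_character | apply: amal_F_character].
Qed.
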